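(* Let $P$ be a positive opetope and $H$ a positive opetopic hypergraph. Then the functor $\mathcal H_\iota$ induces a bijection $\mathbf{pHg}_\iota(P,H)\to\mathrm{Hom}_{\widehat{\mathbf{pOpe}_\iota}}(\mathcal H_\iota(P),\mathcal H_\iota(H))$.
   Context: A positive hypergraph $S$ consists of finite sets $S_k$ ($k\in\mathbb{N}$), only finitely many nonempty, functions $\gamma:S_{k+1}\to S_k$, and for each $k$ an assignment $\delta$ sending each $a\in S_{k+1}$ to a nonempty subset $\delta(a)\subseteq S_k$, with $\delta(a)$ a singleton for $a\in S_1$. A face is identified with its singleton; $\gamma(X)=\{\gamma(a):a\in X\}$, $\delta(X)=\bigcup_{a\in X}\delta(a)$. For $k>0$ the lower order $<^-$ on $S_k$ is the transitive closure of: $a\lhd b$ iff $\gamma(a)\in\delta(b)$. The upper order $<^+$ on $S_k$ is the transitive closure of: $a\lhd b$ iff there is $\alpha\in S_{k+1}$ with $a\in\delta(\alpha)$, $\gamma(\alpha)=b$; $a\perp^{\pm}b$ iff $a<^{\pm}b$ or $b<^{\pm}a$. A positive opetopic cardinal: $S_0\ne\emptyset$; globularity ($\gamma\gamma(a)=\gamma\delta(a)-\delta\delta(a)$, $\delta\gamma(a)=\delta\delta(a)-\gamma\delta(a)$ for $\dim a\ge2$); each $<^+$ a strict order, linear on $S_0$; for $k>0$, $\perp^-\cap\perp^+=\emptyset$ on $S_k$; for $x\in S_{k-1}$, $\{a:\gamma(a)=x\}$ and $\{a:x\in\delta(a)\}$ linearly ordered by $<^+$. A positive opetope: additionally $|P_m-\delta(P_{m+1})|\le1$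 for all $m$. $\gamma^{(k)}(p)=p$ if $\dim p\le k$, else $\gamma^{(k)}(p)=\gamma(\gamma^{(k+1)}(p))$. An $\iota$-map $h:Q\to P$ between positive hypergraphs is a function on faces with: $\dim h(q)\le\dim q$; $h(\gamma^{(k)}(q))=\gamma^{(k)}(h(q))$ for $k\ge0$, $q\in Q_{k+1}$; and, with $\ker(h)=\{q:\dim q>\dim h(q)\}$, for $q\in Q_{k+1}$: if $\dim h(q)=k+1$, $h$ restricts to a bijection $\delta(q)-\ker(h)\to\delta(h(q))$; if $\dim h(q)=k$, to a bijection $\delta(q)-\ker(h)\to\{h(q)\}$; if $\dim h(q)<k$, $\delta(q)\subseteq\ker(h)$. $\mathbf{pHg}_\iota$ is the category of positive hypergraphs and $\iota$-maps, $\mathbf{pOpe}_\iota$ its full subcategory on positive opetopes, and $\widehat{\mathbf{pOpe}_\iota}$ the category of presheaves on $\mathbf{pOpe}_\iota$. The functor $\mathcal H_\iota:\mathbf{pHg}_\iota\to\widehat{\mathbf{pOpe}_\iota}$ sends $H$ to the presheaf $P\mapsto\mathbf{pHg}_\iota(P,H)$. For a face $x$ of a positive hypergraph $H$, $H[x]$ is the least sub-hypergraph of $H$ containing $x$ (closed under $\gamma$, $\delta$); $H$ is a positive opetopic hypergraph if $H[x]$ is a positive opetope for every face $x$ of $H$. *)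

From Stdlib Require Import Relations.
From mathcomp Require Import all_boot.
Set Implicit Arguments. Unset Strict Implicit. Unset Printing Implicit Defensive.

(* A positive hypergraph: a finite type of faces, each with a dimension;
   gam = target gamma, del = source delta (both meaningful only for faces of
   positive dimension; their values on 0-dimensional faces are ignored). *)
Record phg := PHg {
  face : finType;
  dim : face -> nat;
  gam : face -> face;
  del : face -> {set face}
}.

Section Hypergraph.
Variable H : phg.
Local Notation F := (face H).

Definition is_phg : Prop :=
  forall a : F, 0 < dim a ->
    [/\ dim (gam a) = (dim a).-1,
        del a != set0,
        {in del a, forall b, dim b = (dim a).-1} &
        (dim a = 1 -> exists b, del a = [set b])].

Definition gamS (X : {set F}) : {set F} := [set gam a | a in X].
Definition delS (X : {set F}) : {set F} := \bigcup_(a in X) del a.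

Definition lower_step (a b : F) : Prop :=
  [/\ 0 < dim a, dim a = dim b & gam a \in del b].
Definition upper_step (a b : F) : Prop :=
  dim a = dim b /\
  exists al : F, [/\ dim al = (dim a).+1, a \in del al & gam al = b].

Definition lower_lt : relation F := clos_trans F lower_step.
Definition upper_lt : relation F := clos_trans F upper_step.
Definition lower_perp (a b : F) : Prop := lower_lt a b \/ lower_lt b a.
Definition upper_perp (a b : F) : Prop := upper_lt a b \/ upper_lt b a.

Definition is_pocardinal : Prop :=
  is_phg /\ (exists a : F, dim a = 0) /\
  [/\
      (forall a : F, 2 <= dim a ->
         [set gam (gam a)] = gamS (del a) :\: delS (del a) /\
         del (gam a) = delS (del a) :\: gamS (del a)),
      (forall a : F, ~ upper_lt a a),
      (forall a b : F, dim a = 0 -> dim b = 0 -> a <> b -> upper_perp a b) &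
      (forall a b : F, 0 < dim a -> dim a = dim b ->
         ~ (lower_perp a b /\ upper_perp a b))] /\
  [/\
      (forall x a b : F, 0 < dim a -> 0 < dim b -> gam a = x -> gam b = x ->
         a <> b -> upper_perp a b) &
      (forall x a b : F, 0 < dim a -> 0 < dim b -> x \in del a -> x \in del b ->
         a <> b -> upper_perp a b)].

Definition is_popetope : Prop :=
  is_pocardinal /\
  forall m : nat,
    #|[set a : F | (dim a == m) && (a \notin delS [set b : F | dim b == m.+1])]| <= 1.

Definition gamk (k : nat) (p : F) : F := iter (dim p - k) (@gam H) p.

Definition closedb (S : {set F}) : bool :=
  [forall a in S, (0 < dim a) ==> ((gam a \in S) && (del a \subset S))].
Definition closure (x : F) : {set F} :=
  \bigcap_(S : {set F} | closedb S && (x \in S)) S.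

Definition subface (S : {set F}) : finType := {a : F | a \in S}.
Definition subhg (S : {set F}) : phg :=
  @PHg (subface S)
       (fun a => dim (val a))
       (fun a => odflt a (insub (gam (val a))))
       (fun a => [set b : subface S | val b \in del (val a)]).

End Hypergraph.

Definition face_subhg (H : phg) (x : face H) : phg := subhg (closure x).

Definition is_opetopic_hg (H : phg) : Prop :=
  is_phg H /\ forall x : face H, is_popetope (face_subhg x).

Definition bij_on (T U : finType) (h : T -> U) (A : {set T}) (B : {set U}) : Prop :=
  {in A &, injective h} /\ h @: A = B.

Definition is_iota (Q P : phg) (h : face Q -> face P) : Prop :=
  let ker := [set q : face Q | dim (h q) < dim q] in
  [/\ (forall q : face Q, dim (h q) <= dim q),
      (forall (k : nat) (q : face Q), dim q = k.+1 ->
         h (gamk k q) = gamk k (h q)) &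
      (forall (k : nat) (q : face Q), dim q = k.+1 ->
         [/\ dim (h q) = k.+1 -> bij_on h (del q :\: ker) (del (h q)),
             dim (h q) = k -> bij_on h (del q :\: ker) [set h q] &
             dim (h q) < k -> del q \subset ker])].

(* A morphism H_iota(P) -> H_iota(H) of presheaves on pOpe_iota: a family of maps
   pHg_iota(Q,P) -> pHg_iota(Q,H) indexed by positive opetopes Q, natural in Q. *)
Definition pretrans (P H : phg) : Type :=
  forall Q : phg, {ffun face Q -> face P} -> {ffun face Q -> face H}.

Definition is_nattrans (P H : phg) (al : pretrans P H) : Prop :=
  (forall (Q : phg), is_popetope Q ->
     forall f : {ffun face Q -> face P}, is_iota f -> is_iota (al Q f)) /\
  (forall (Q Q' : phg), is_popetope Q -> is_popetope Q' ->
     forall (f : {ffun face Q -> face P}) (g : {ffun face Q' -> face Q}),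
       is_iota f -> is_iota g ->
       al Q' [ffun q => f (g q)] = [ffun q => al Q f (g q)]).

Definition eq_nattrans (P H : phg) (al be : pretrans P H) : Prop :=
  forall Q : phg, is_popetope Q ->
    forall f : {ffun face Q -> face P}, is_iota f -> al Q f = be Q f.

Definition Hiota_map (P H : phg) (h : {ffun face P -> face H}) : pretrans P H :=
  fun Q f => [ffun q => h (f q)].

(* H_iota acts by postcomposition, so the theorem is the Yoneda lemma for the
   representable presheaf pHg_iota(-, P), P being itself a positive opetope;
   no property of H is needed. What has to be checked is that iota-maps form
   a category: the identity is an iota-map, and iota-maps compose because the
   kernel of [h \o f] is [ker f] together with the preimage under [f] of
   [ker h], so the bijections on sources required of [f] and [h] compose. *)
From mathcomp Require Import all_boot zify.
From Stdlib Require Import FunctionalExtensionality.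
Set Implicit Arguments. Unset Strict Implicit. Unset Printing Implicit Defensive.

Lemma bij_on_comp (T U V : finType) (f : T -> U) (g : U -> V)
    (D Kf Kgf : {set T}) (Kg B : {set U}) (C : {set V}) :
  {in D, forall x, (x \in Kgf) = (x \in Kf) || (f x \in Kg)} ->
  bij_on f (D :\: Kf) B -> bij_on g (B :\: Kg) C ->
  bij_on (g \o f) (D :\: Kgf) C.
Proof.
move=> KgfE [f_inj fDB] [g_inj gBC].
have memDKgf x : (x \in D :\: Kgf) = (x \in D :\: Kf) && (f x \notin Kg).
  by rewrite !inE; case xD: (x \in D); rewrite ?andbT ?andbF //= KgfE // negb_or.
have fB x : x \in D :\: Kf -> f x \in B by move=> xD; rewrite -fDB imset_f.
split.
- move=> x y; rewrite !memDKgf => /andP[xD xKg] /andP[yD yKg] /= gfxy.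
  by apply: f_inj => //; apply: g_inj; rewrite // inE ?xKg ?yKg fB.
- rewrite -gBC; apply/setP=> z; apply/imsetP/imsetP => [[x xDK ->] | [y]].
  + move: (memDKgf x); rewrite xDK => /esym/andP[xD xKg].
    by exists (f x); rewrite // inE xKg fB.
  + rewrite inE -fDB => /andP[yKg /imsetP[x xD fxy]] ->.
    have xDK : x \in D :\: Kgf by rewrite memDKgf xD -fxy yKg.
    by exists x; rewrite //= fxy.
Qed.

Lemma bij_on_comp_ker (T U : finType) (f : T -> U) (D Kf Kgf : {set T})
    (Kg B : {set U}) :
  {in D, forall x, (x \in Kgf) = (x \in Kf) || (f x \in Kg)} ->
  bij_on f (D :\: Kf) B -> B \subset Kg -> D \subset Kgf.
Proof.
move=> KgfE [_ fDB] BKg; apply/subsetP => x xD; rewrite KgfE //.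
case xKf: (x \in Kf) => //=.
by apply: (subsetP BKg); rewrite -fDB imset_f // inE xKf.
Qed.

Lemma bij_on_set1 (T U : finType) (h : T -> U) (x : T) :
  bij_on h [set x] [set h x].
Proof.
split; last by rewrite imset_set1.
by move=> a b; rewrite !inE => /eqP-> /eqP->.
Qed.

Definition iota_ker (Q P : phg) (h : face Q -> face P) : {set face Q} :=
  [set q | dim (h q) < dim q].

Definition iota_del_spec (Q P : phg) (h : face Q -> face P) (k : nat)
    (q : face Q) : Prop :=
  [/\ dim (h q) = k.+1 -> bij_on h (del q :\: iota_ker h) (del (h q)),
      dim (h q) = k -> bij_on h (del q :\: iota_ker h) [set h q] &
      dim (h q) < k -> del q \subset iota_ker h].

Lemma gamk_id (H : phg) (k : nat) (p : face H) : dim p <= k -> gamk k p = p.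
Proof. by rewrite /gamk -subn_eq0 => /eqP->. Qed.

Section IotaComp.

Variables (Q P H : phg) (f : face Q -> face P) (h : face P -> face H).
Hypotheses (f_iota : is_iota f) (h_iota : is_iota h).

Lemma mem_iota_ker_comp (q : face Q) :
  (q \in iota_ker (h \o f)) = (q \in iota_ker f) || (f q \in iota_ker h).
Proof.
have [dim_f _ _] := f_iota; have [dim_h _ _] := h_iota.
by rewrite !inE /=; have := dim_f q; have := dim_h (f q); lia.
Qed.

Lemma iota_del_spec_comp (k : nat) (q : face Q) : dim q = k.+1 ->
  iota_del_spec f k q -> (dim (f q) = k.+1 -> iota_del_spec h k (f q)) ->
  iota_del_spec (h \o f) k q.
Proof.
have [dim_f _ _] := f_iota; have [dim_h _ _] := h_iota.
move=> dq [f_bij f_pt f_ker] h_spec.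
have kerE : {in del q, forall x, (x \in iota_ker (h \o f)) =
    (x \in iota_ker f) || (f x \in iota_ker h)}.
  by move=> x _; exact: mem_iota_ker_comp.
have dhf := dim_h (f q); have : dim (f q) <= k.+1 by rewrite -dq.
rewrite leq_eqVlt ltnS leq_eqVlt => /or3P[/eqP dfq | /eqP dfq | dfq].
- have [h_bij h_pt h_ker] := h_spec dfq; split=> dhfq.
  + exact: bij_on_comp kerE (f_bij dfq) (h_bij dhfq).
  + exact: bij_on_comp kerE (f_bij dfq) (h_pt dhfq).
  + exact: bij_on_comp_ker kerE (f_bij dfq) (h_ker dhfq).
- split=> /= dhfq; first lia.
  + apply: bij_on_comp kerE (f_pt dfq) _.
    rewrite (_ : [set f q] :\: iota_ker h = [set f q]); first exact: bij_on_set1.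
    apply/setP=> y; rewrite !inE; case: eqP => [->|]; rewrite ?andbF //.
    by rewrite dhfq dfq ltnn.
  + by apply: bij_on_comp_ker kerE (f_pt dfq) _; rewrite sub1set inE dfq.
- split=> /= dhfq; try lia.
  apply: subset_trans (f_ker dfq) _.
  by apply/subsetP => x; rewrite mem_iota_ker_comp => ->.
Qed.

Lemma iota_comp : is_iota (h \o f).
Proof.
have [dim_f f_gamk f_del] := f_iota; have [dim_h h_gamk h_del] := h_iota.
split.
- by move=> q; exact: leq_trans (dim_h _) (dim_f _).
- move=> k q dq; rewrite /= f_gamk //.
  have : dim (f q) <= k.+1 by rewrite -dq.
  rewrite leq_eqVlt ltnS => /orP[/eqP dfq | dfq]; first exact: h_gamk.
  by rewrite !gamk_id // (leq_trans (dim_h _)).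
- move=> k q dq; apply: iota_del_spec_comp (f_del k q dq) _ => // dfq.
  exact: h_del.
Qed.

End IotaComp.

Lemma iota_id (Q : phg) : is_iota (@id (face Q)).
Proof.
split=> // k q dq.
have -> : del q :\: iota_ker id = del q by apply/setP => y; rewrite !inE ltnn.
by split=> [_|d|d]; [split; [move=> ? ?|rewrite imset_id] | lia | lia].
Qed.

Lemma iota_ffun (Q P : phg) (g : face Q -> face P) :
  is_iota g -> is_iota [ffun q => g q].
Proof.
have -> // : fun_of_fin [ffun q => g q] = g.
by apply: functional_extensionality => q; rewrite ffunE.
Qed.

Lemma Hiota_map_nattrans (P H : phg) (h : {ffun face P -> face H}) :
  is_iota h -> is_nattrans (Hiota_map h).
Proof.
move=> h_iota; split=> [Q _ f f_iota | Q Q' _ _ f g _ _].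
- exact/iota_ffun/iota_comp.
- by apply/ffunP => q; rewrite !ffunE.
Qed.

Lemma Hiota_map_inj (P H : phg) (h1 h2 : {ffun face P -> face H}) :
  is_popetope P -> eq_nattrans (Hiota_map h1) (Hiota_map h2) -> h1 = h2.
Proof.
move=> P_ope /(_ P P_ope _ (iota_ffun (iota_id P)))/ffunP h12.
by apply/ffunP => p; have := h12 p; rewrite !ffunE.
Qed.

Lemma nattrans_Hiota_map (P H : phg) (al : pretrans P H) :
  is_popetope P -> is_nattrans al ->
  is_iota (al P [ffun p => p]) /\ eq_nattrans al (Hiota_map (al P [ffun p => p])).
Proof.
move=> P_ope [al_iota al_nat]; have id_iota := iota_ffun (iota_id P).
split=> [|Q Q_ope f f_iota]; first exact: al_iota.
rewrite /Hiota_map -al_nat //; congr (al Q _).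
by apply/ffunP => q; rewrite !ffunE.
Qed.

Theorem mainTheorem12 (P H : phg) :
  is_popetope P -> is_opetopic_hg H ->
  [/\ (* H_iota sends iota-maps P -> H to presheaf morphisms *)
      (forall h : {ffun face P -> face H}, is_iota h -> is_nattrans (Hiota_map h)),
      (* injectivity *)
      (forall h1 h2 : {ffun face P -> face H}, is_iota h1 -> is_iota h2 ->
         eq_nattrans (Hiota_map h1) (Hiota_map h2) -> h1 = h2) &
      (* surjectivity *)
      (forall al : pretrans P H, is_nattrans al ->
         exists2 h : {ffun face P -> face H}, is_iota h &
           eq_nattrans al (Hiota_map h))].
Proof.
move=> P_ope _; split.
- exact: Hiota_map_nattrans.
- by move=> h1 h2 _ _; exact: Hiota_map_inj.
- move=> al al_nat; have [al_iota al_eq] := nattrans_Hiota_map P_ope al_nat.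
  by exists (al P [ffun p => p]).
Qed.
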